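(* Let $t_1=t_2$ be a 2-discerning equation and let $T$ be a monoidal monad on $\mathbf{Set}$. Then $T$ is relevant if and only if $T$ preserves $t_1=t_2$.
   Context: An equation $t_1=t_2$ over variables $x_1,\dots,x_n$ is 2-discerning if: every variable occurs in both $t_1$ and $t_2$; $x_1$ is the only variable occurring more than once, occurring exactly once in one side, say $t_1$, and exactly twice in the other side $t_2$, and all other variables occur exactly once on each side; and, letting $s_2$ be the term obtained from $t_2$ by renaming one of the two occurrences of $x_1$ to a fresh variable $x_1'$ (so that $t_2=s_2[x_1/x_1']$) and $s_2'$ the term obtained from $s_2$ by swapping $x_1$ and $x_1'$, the linear equation $s_2=s_2'$ is not derivable in equational logic from $t_1=t_2$. A monoidal monad on $\mathbf{Set}$ has natural $\psi_{X,Y}\colon TX\times TY\to T(X\times Y)$ making $T$ lax monoidal with $\psi^0=\eta_1$ and $\eta,\mu$ monoidal; $\psi^n$ is its $n$-ary version. The lifting $\widehat T\mathcal A$ of a $\Sigma$-algebra on $A$ has carrier $TA$ and operations $T\sigma_{\mathcal A}\circ\psi^{\mathrm{ar}(\sigma)}$; $T$ preserves an equation if $\widehat T\mathcal A$ satisfies it whenever $\mathcal A$ does. $T$ is relevant if $\psi_{A,B}\circ\langle T\pi_1,T\pi_2\rangle=\mathrm{id}_{T(A\times B)}$ for all $A,B$. *)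

From mathcomp Require Import all_boot.
Set Implicit Arguments. Unset Strict Implicit. Unset Printing Implicit Defensive.

Record signature := Signature { op : Type; ar : op -> nat }.

Inductive term (S : signature) (V : Type) : Type :=
| Var : V -> term S V
| App : forall o : op S, ('I_(ar o) -> term S V) -> term S V.
Arguments Var {S V} _.
Arguments App {S V} o _.

Fixpoint occ (S : signature) (V : eqType) (x : V) (t : term S V) : nat :=
  match t with
  | Var v => (v == x) : nat
  | App o a => \sum_(i < ar o) occ x (a i)
  end.

Fixpoint rename (S : signature) (V W : Type) (f : V -> W) (t : term S V) : term S W :=
  match t with
  | Var v => Var (f v)
  | App o a => App o (fun i => rename f (a i))
  end.

Fixpoint subst (S : signature) (V W : Type) (s : V -> term S W) (t : term S V) : term S W :=
  match t with
  | Var v => s v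
  | App o a => App o (fun i => subst s (a i))
  end.

Inductive derives (S : signature) (l r : term S nat) (W : Type)
  : term S W -> term S W -> Prop :=
| der_ax : forall s : nat -> term S W, derives l r (subst s l) (subst s r)
| der_refl : forall u, derives l r u u
| der_sym : forall u v, derives l r u v -> derives l r v u
| der_trans : forall u v w, derives l r u v -> derives l r v w -> derives l r u w
| der_cong : forall (o : op S) (a b : 'I_(ar o) -> term S W),
    (forall i, derives l r (a i) (b i)) -> derives l r (App o a) (App o b)
| der_subst : forall (s : W -> term S W) u v,
    derives l r u v -> derives l r (subst s u) (subst s v).

(* swap of x (= Some x) and the fresh variable x' (= None) *)
Definition swap_fresh (x : nat) (o : option nat) : option nat :=
  match o with
  | None => Some x
  | Some v => if v == x then None else Some v
  end.

(* The fresh variable x' is [None]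
   in [term S (option nat)]; s2 ranges over the terms obtained from t2 by
   renaming one of the two occurrences of x to x'. *)
Definition two_discerning (S : signature) (t1 t2 : term S nat) (x : nat) : Prop :=
  [/\ occ x t1 = 1,
      occ x t2 = 2,
      (forall v, v <> x -> occ v t1 = occ v t2 /\ occ v t1 <= 1) &
      (forall s2 : term S (option nat),
          rename (odflt x) s2 = t2 -> occ None s2 = 1 ->
          ~ derives t1 t2 s2 (rename (swap_fresh x) s2))].

Definition algebra (S : signature) (A : Type) := forall o : op S, ('I_(ar o) -> A) -> A.

Fixpoint eval (S : signature) (A V : Type) (alg : algebra S A) (rho : V -> A)
  (t : term S V) : A :=
  match t with
  | Var v => rho v
  | App o a => alg o (fun i => eval alg rho (a i))
  end.

Definition satisfies (S : signature) (A : Type) (alg : algebra S A)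
  (t1 t2 : term S nat) : Prop :=
  forall rho : nat -> A, eval alg rho t1 = eval alg rho t2.

Record monoidal_monad := MonoidalMonad {
  T : Type -> Type;
  fmap : forall A B : Type, (A -> B) -> T A -> T B;
  ret : forall A : Type, A -> T A;
  join : forall A : Type, T (T A) -> T A;
  psi : forall A B : Type, T A -> T B -> T (A * B);
  fmap_id : forall A (m : T A), fmap id m = m;
  fmap_comp : forall A B C (f : A -> B) (g : B -> C) (m : T A),
      fmap (g \o f) m = fmap g (fmap f m);
  ret_nat : forall A B (f : A -> B) (a : A), fmap f (ret a) = ret (f a);
  join_nat : forall A B (f : A -> B) (m : T (T A)),
      fmap f (join m) = join (fmap (fmap f) m);
  psi_nat : forall A A' B B' (f : A -> A') (g : B -> B') (a : T A) (b : T B),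
      psi (fmap f a) (fmap g b) = fmap (fun p => (f p.1, g p.2)) (psi a b);
  join_ret : forall A (m : T A), join (ret m) = m;
  join_fmap_ret : forall A (m : T A), join (fmap (@ret A) m) = m;
  join_join : forall A (m : T (T (T A))), join (join m) = join (fmap (@join A) m);
  (* lax monoidal structure, with psi^0 = ret tt *)
  psi_assoc : forall A B C (a : T A) (b : T B) (c : T C),
      fmap (fun p => (p.1.1, (p.1.2, p.2))) (psi (psi a b) c) = psi a (psi b c);
  psi_unitl : forall B (b : T B), fmap snd (psi (ret tt) b) = b;
  psi_unitr : forall A (a : T A), fmap fst (psi a (ret tt)) = a;
  ret_monoidal : forall A B (a : A) (b : B), psi (ret a) (ret b) = ret (a, b);
  join_monoidal : forall A B (m : T (T A)) (n : T (T B)),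
      join (fmap (fun p => psi p.1 p.2) (psi m n)) = psi (join m) (join n)
}.
Arguments fmap {_ A B} _ _.
Arguments ret {_ A} _.
Arguments join {_ A} _.
Arguments psi {_ A B} _ _.

Definition nil_fun (X : Type) : 'I_0 -> X.
Proof. by case. Defined.

Definition cons_fun (X : Type) (n : nat) (x : X) (f : 'I_n -> X) : 'I_n.+1 -> X :=
  fun i => match unlift ord0 i with Some j => f j | None => x end.

Fixpoint psin (M : monoidal_monad) (X : Type) (n : nat)
  : ('I_n -> T M X) -> T M ('I_n -> X) :=
  match n return ('I_n -> T M X) -> T M ('I_n -> X) with
  | 0 => fun _ => ret (nil_fun X)
  | n'.+1 => fun f =>
      fmap (fun p => cons_fun p.1 p.2) (psi (f ord0) (psin (fun i => f (lift ord0 i))))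
  end.

Definition lift_alg (M : monoidal_monad) (S : signature) (A : Type)
  (alg : algebra S A) : algebra S (T M A) :=
  fun o f => fmap (alg o) (psin f).

Definition preserves (M : monoidal_monad) (S : signature) (t1 t2 : term S nat) : Prop :=
  forall (A : Type) (alg : algebra S A),
    satisfies alg t1 t2 -> satisfies (@lift_alg M S A alg) t1 t2.

Definition relevant (M : monoidal_monad) : Prop :=
  forall (A B : Type) (p : T M (A * B)), psi (fmap fst p) (fmap snd p) = p.

From mathcomp Require Import all_boot.
From Stdlib Require Import Classical ClassicalEpsilon.
From Stdlib Require Import FunctionalExtensionality PropExtensionality ProofIrrelevance.
Set Implicit Arguments. Unset Strict Implicit. Unset Printing Implicit Defensive.

(* Every monoidal monad on Set is commutative (because [join] is monoidal), so
   in a lifted algebra the value of a term is obtained by binding the values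
   of its variables in any order.  A variable occurring once can always be
   bound first; if T is relevant, i.e. [psi q q] is the diagonal of [q], a
   single bind also suffices for a variable occurring several times.  Binding
   every variable then reduces both sides of an equation with the same
   variables to values in the original algebra, where it holds.

   Conversely, interpret the 2-discerning equation [l = r] in the free algebra
   on [nat + X] modulo derivability from [l = r], sending [x] to [q : T X] and
   every other variable to itself.  Then [l] evaluates to the image of the
   diagonal of [q] and [r] to the image of [psi q q] under
   [h (y, z) = class of s2[x := y, x' := z]].  Derivations preserve the set of
   variables, and [s2 = s2'] is not derivable, so [h] is injective; hence so
   is [fmap h], and [psi q q] is the diagonal of [q]. *)

Definition upd (V : eqType) B (f : V -> B) (w : V) (b : B) : V -> B :=
  fun v => if v == w then b else f v.

Section MonoidalMonad.
Variable M : monoidal_monad.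

Definition bind A B (m : T M A) (f : A -> T M B) : T M B := join (fmap f m).

Lemma bind_retl A B (a : A) (f : A -> T M B) : bind (ret a) f = f a.
Proof. by rewrite /bind ret_nat join_ret. Qed.

Lemma bind_retr A (m : T M A) : bind m ret = m.
Proof. exact: join_fmap_ret. Qed.

Lemma bind_assoc A B C (m : T M A) (f : A -> T M B) (g : B -> T M C) :
  bind (bind m f) g = bind m (fun a => bind (f a) g).
Proof. by rewrite /bind join_nat join_join -!fmap_comp. Qed.

Lemma eq_bind A B (m : T M A) (f g : A -> T M B) :
  f =1 g -> bind m f = bind m g.
Proof. by move=> /functional_extensionality ->. Qed.

Lemma fmap_bindE A B (f : A -> B) (m : T M A) : fmap f m = bind m (ret \o f).
Proof. by rewrite /bind fmap_comp join_fmap_ret. Qed.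

Lemma fmap_bind A B C (f : B -> C) (m : T M A) (g : A -> T M B) :
  fmap f (bind m g) = bind m (fun a => fmap f (g a)).
Proof. by rewrite fmap_bindE bind_assoc; apply: eq_bind => a; rewrite fmap_bindE. Qed.

Lemma psi_retl A B (a : A) (n : T M B) : psi (ret a) n = fmap (pair a) n.
Proof.
have := psi_nat (fun=> a) id (ret tt) n; rewrite fmap_id ret_nat => ->.
by rewrite -[in RHS](psi_unitl n) -fmap_comp.
Qed.

Lemma psi_retr A B (m : T M A) (b : B) : psi m (ret b) = fmap (fun a => (a, b)) m.
Proof.
have := psi_nat id (fun=> b) m (ret tt); rewrite fmap_id ret_nat => ->.
by rewrite -[in RHS](psi_unitr m) -fmap_comp.
Qed.

Lemma psi_bindl A B (m : T M A) (n : T M B) :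
  psi m n = bind m (fun a => bind n (fun b => ret (a, b))).
Proof.
rewrite -[m in LHS]join_fmap_ret -[n in LHS]join_ret -join_monoidal.
rewrite psi_retr -fmap_comp /bind -fmap_comp.
congr (join (fmap _ m)); apply: functional_extensionality => a /=.
by rewrite psi_retl fmap_bindE.
Qed.

Lemma psi_bindr A B (m : T M A) (n : T M B) :
  psi m n = bind n (fun b => bind m (fun a => ret (a, b))).
Proof.
rewrite -[m in LHS]join_ret -[n in LHS]join_fmap_ret -join_monoidal.
rewrite psi_retl -fmap_comp /bind -fmap_comp.
congr (join (fmap _ n)); apply: functional_extensionality => b /=.
by rewrite psi_retr fmap_bindE.
Qed.

Lemma bind_psi A B C (m : T M A) (n : T M B) (g : A * B -> T M C) :
  bind (psi m n) g = bind m (fun a => bind n (fun b => g (a, b))).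
Proof.
rewrite psi_bindl bind_assoc; apply: eq_bind => a.
by rewrite bind_assoc; apply: eq_bind => b; rewrite bind_retl.
Qed.

Lemma bindC A B C (m : T M A) (n : T M B) (f : A -> B -> T M C) :
  bind m (fun a => bind n (f a)) = bind n (fun b => bind m (fun a => f a b)).
Proof.
rewrite -(bind_psi m n (fun p => f p.1 p.2)) psi_bindr bind_assoc.
by apply: eq_bind => b; rewrite bind_assoc; apply: eq_bind => a; rewrite bind_retl.
Qed.

Lemma fmap_inj A B (h : A -> B) : injective h -> injective (@fmap M A B h).
Proof.
move=> h_inj m1 m2 E.
pose g (y : B) : T M A :=
  match excluded_middle_informative (exists a, h a = y) with
  | left hex => ret (proj1_sig (constructive_indefinite_description _ hex))
  | right _ => m1
  end.
have gK a : g (h a) = ret a.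
  rewrite /g; case: excluded_middle_informative => [hex|[]]; last by exists a.
  by case: constructive_indefinite_description => a' /= /h_inj ->.
have fmapK m : bind (fmap h m) g = m.
  rewrite fmap_bindE bind_assoc -[RHS]bind_retr.
  by apply: eq_bind => a; rewrite bind_retl gK.
by rewrite -[m1]fmapK E fmapK.
Qed.

Lemma relevant_diagP :
  relevant M <-> forall A (m : T M A), psi m m = fmap (fun a => (a, a)) m.
Proof.
split=> [rel A m|diag A B p].
  by have := rel A A (fmap (fun a => (a, a)) m); rewrite -!fmap_comp !fmap_id.
rewrite psi_nat diag -fmap_comp -[RHS]fmap_id.
by congr (fmap _ p); apply: functional_extensionality => -[].
Qed.

Lemma bind_dup A B (m : T M A) (f : A -> A -> T M B) : relevant M ->
  bind m (fun a => bind m (f a)) = bind m (fun a => f a a).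
Proof.
move=> /relevant_diagP diag.
rewrite -(bind_psi m m (fun p => f p.1 p.2)) diag fmap_bindE bind_assoc.
by apply: eq_bind => a; rewrite bind_retl.
Qed.

Lemma psinS X n (F : 'I_n.+1 -> T M X) :
  psin F = bind (F ord0) (fun a =>
             bind (psin (fun i => F (lift ord0 i))) (fun f => ret (cons_fun a f))).
Proof. by rewrite /= fmap_bindE bind_psi. Qed.

Lemma psin_ret X n (y : 'I_n -> X) : psin (fun i => ret (y i)) = ret y :> T M _.
Proof.
elim: n y => [|n IH] y; first by congr ret; apply: functional_extensionality; case.
rewrite psinS bind_retl IH bind_retl; congr ret.
by apply: functional_extensionality => i; rewrite /cons_fun; case: unliftP => [j|] ->.
Qed.

Lemma psin_pull X n (F : 'I_n -> T M X) (j : 'I_n) :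
  psin F = bind (F j) (fun a => psin (upd F j (ret a))).
Proof.
elim: n F j => [|n IH] F j; first by case: j.
rewrite psinS; case: (unliftP ord0 j) => [j' ->|->]; last first.
  by apply: eq_bind => a; rewrite psinS /upd eqxx bind_retl.
rewrite (IH _ j'); under eq_bind do rewrite bind_assoc.
rewrite bindC; apply: eq_bind => a; rewrite psinS /upd (negbTE (neq_lift ord0 j')).
by apply: eq_bind => b; congr (bind (psin _) _); apply: functional_extensionality => i;
  rewrite (inj_eq (@lift_inj _ ord0)).
Qed.

Lemma psin_bind1 X B n (m : T M B) (G : B -> 'I_n -> T M X) (F : 'I_n -> T M X)
    (j : 'I_n) :
  F j = bind m (G^~ j) -> (forall i, i != j -> forall b, G b i = F i) ->
  psin F = bind m (fun b => psin (G b)).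
Proof.
move=> Fj FG; rewrite (psin_pull F j) Fj bind_assoc; apply: eq_bind => b.
rewrite (psin_pull (G b) j); apply: eq_bind => a; congr psin.
by apply: functional_extensionality => i; rewrite /upd; case: eqP => // /eqP /FG ->.
Qed.

Lemma psin_bind X B n (m : T M B) (G : B -> 'I_n -> T M X) (F : 'I_n -> T M X)
    (U : 'I_n -> Prop) : relevant M ->
  (forall i, U i -> F i = bind m (G^~ i)) ->
  (forall i, ~ U i -> forall b, G b i = F i) ->
  (exists i, U i) -> psin F = bind m (fun b => psin (G b)).
Proof.
move=> rel; elim: n F G U => [|n IH] F G U FU FG [i0 Ui0]; first by case: i0 Ui0.
rewrite psinS; under [RHS]eq_bind do rewrite psinS.
have [[j Uj]|tail_nU] := classic (exists j, U (lift ord0 j)); last first.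
  have U0 : U ord0.
    by case: (unliftP ord0 i0) Ui0 => [j ->|->] // Uj; case: tail_nU; exists j.
  rewrite FU // bind_assoc; apply: eq_bind => b; apply: eq_bind => a.
  congr (bind (psin _) _).
  apply: functional_extensionality => i; rewrite FG // => Ui; apply: tail_nU; by exists i.
rewrite (IH _ (fun b i => G b (lift ord0 i)) (fun i => U (lift ord0 i))); last 3 first.
- by move=> i /FU.
- by move=> i /FG.
- by exists j.
under eq_bind do rewrite bind_assoc.
have [U0|nU0] := classic (U ord0).
  rewrite FU // bind_assoc.
  under eq_bind do rewrite bindC.
  by rewrite bind_dup.
by rewrite bindC; apply: eq_bind => b; rewrite FG.
Qed.

End MonoidalMonad.

Section Terms.
Variable S : signature.

Fixpoint occurs (V : Type) (w : V) (t : term S V) : Prop :=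
  match t with
  | Var v => v = w
  | App o a => exists i, occurs w (a i)
  end.

Lemma occursE (V : eqType) (w : V) (t : term S V) : occurs w t <-> 0 < occ w t.
Proof.
elim: t => [v|o a IH] /=; first by rewrite lt0b; split=> [->|/eqP].
split=> [[i /IH occ_i]|]; first by rewrite (bigD1 i) //= ltn_addr.
rewrite lt0n sum_nat_eq0 => /forallPn [i]; rewrite implyTb -lt0n => /IH; by exists i.
Qed.

Lemma eval_ext (V A : Type) (alg : algebra S A) (rho1 rho2 : V -> A) (s : term S V) :
  (forall v, occurs v s -> rho1 v = rho2 v) -> eval alg rho1 s = eval alg rho2 s.
Proof.
elim: s => [v|o a IH] /= eq_rho; first exact: eq_rho.
congr (alg o); apply: functional_extensionality => i; apply: IH => v occ_v.
by apply: eq_rho; exists i.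
Qed.

Lemma eval_rename (V W A : Type) (alg : algebra S A) (rho : W -> A) (f : V -> W)
    (s : term S V) :
  eval alg rho (rename f s) = eval alg (rho \o f) s.
Proof.
by elim: s => [v|o a IH] //=; congr (alg o); apply: functional_extensionality.
Qed.

Fixpoint vars (t : term S nat) : seq nat :=
  match t with
  | Var v => [:: v]
  | App o a => flatten [seq vars (a i) | i <- enum 'I_(ar o)]
  end.

Lemma mem_vars (t : term S nat) v : v \in vars t <-> occurs v t.
Proof.
elim: t => [u|o a IH] /=; first by rewrite inE eq_sym; split=> /eqP.
split=> [/flattenP [_ /mapP [i _ ->] /IH]|[i /IH]]; first by exists i.
move=> v_ai; apply/flattenP; exists (vars (a i)) => //.
by apply/mapP; exists i; rewrite ?mem_enum.
Qed.

Section LiftedAlgebra.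
Variables (M : monoidal_monad) (A : Type) (alg : algebra S A).
Local Notation evl rho t := (eval (lift_alg alg) rho t).

Lemma eval_lift_ret (V : Type) (rho : V -> T M A) (c : V -> A) (s : term S V) :
  (forall v, occurs v s -> rho v = ret (c v)) -> evl rho s = ret (eval alg c s).
Proof.
elim: s => [v|o a IH] /= rho_c; first exact: rho_c.
rewrite /lift_alg -ret_nat -psin_ret; congr (fmap _ (psin _)).
by apply: functional_extensionality => i; apply: IH => v occ_v; apply: rho_c; exists i.
Qed.

Lemma eval_lift_pull1 (V : eqType) (rho : V -> T M A) (w : V) (s : term S V) :
  occ w s = 1 -> evl rho s = bind (rho w) (fun b => evl (upd rho w (ret b)) s).
Proof.
elim: s rho => [v|o a IH] rho /=.
  by case: eqP => // -> _; rewrite /upd eqxx bind_retr.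
move=> /eqP /sum_nat_eq1 [j [_ occ_j occ0]].
rewrite /lift_alg (@psin_bind1 _ _ _ _ (rho w)
  (fun b i => evl (upd rho w (ret b)) (a i)) _ j).
- by rewrite fmap_bind.
- exact: IH.
move=> i /occ0 occ_i b; apply: eval_ext => v; rewrite /upd.
by case: eqP => // -> /occursE; rewrite occ_i.
Qed.

Lemma eval_lift_pull (V : eqType) (rho : V -> T M A) (w : V) (s : term S V) :
  relevant M -> occurs w s ->
  evl rho s = bind (rho w) (fun b => evl (upd rho w (ret b)) s).
Proof.
move=> rel; elim: s rho => [v|o a IH] rho /=.
  by move=> ->; rewrite /upd eqxx bind_retr.
move=> occ_w; rewrite /lift_alg (@psin_bind _ _ _ _ (rho w)
  (fun b i => evl (upd rho w (ret b)) (a i)) _ (fun i => occurs w (a i))) //.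
- by rewrite fmap_bind.
- by move=> i /IH.
move=> i nocc b; apply: eval_ext => v; rewrite /upd.
by case: eqP => // -> /nocc.
Qed.

Lemma eval_lift_single (V : eqType) (rho : V -> T M A) (c : V -> A) (w : V)
    (s : term S V) :
  occ w s = 1 -> (forall v, v != w -> rho v = ret (c v)) ->
  evl rho s = fmap (fun a => eval alg (upd c w a) s) (rho w).
Proof.
move=> occ_w rho_c; rewrite (eval_lift_pull1 _ occ_w) fmap_bindE.
apply: eq_bind => a; apply: eval_lift_ret => v _; rewrite /upd.
by case: eqP => [//|/eqP /rho_c].
Qed.

Lemma eval_lift_sat (l r : term S nat) (vs : seq nat) (rho : nat -> T M A)
    (c : nat -> A) :
  relevant M -> (forall v, occurs v l <-> occurs v r) -> satisfies alg l r ->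
  (forall v, occurs v l -> v \notin vs -> rho v = ret (c v)) ->
  evl rho l = evl rho r.
Proof.
move=> rel lr sat; elim: vs rho c => [|v vs IH] rho c rho_c.
  have pure v : occurs v l -> rho v = ret (c v) by move=> l_v; exact: rho_c.
  rewrite (eval_lift_ret (c := c) pure) (eval_lift_ret (c := c)) ?sat //.
  by move=> v /lr; apply: pure.
have [l_v|l_nv] := classic (occurs v l).
  rewrite !(eval_lift_pull _ (w := v)) -?lr //; apply: eq_bind => b.
  apply: (IH _ (upd c v b)) => u l_u vs_u; rewrite /upd.
  by case: eqP => // /eqP ne_uv; apply: rho_c; rewrite // inE negb_or ne_uv.
apply: (IH _ c) => u l_u vs_u; apply: rho_c; rewrite // inE negb_or vs_u andbT.
by apply: contraPneq l_nv => <-.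
Qed.

End LiftedAlgebra.

Lemma relevant_preserves (M : monoidal_monad) (l r : term S nat) (x : nat) :
  relevant M -> occurs x l -> (forall v, occurs v l <-> occurs v r) -> preserves M l r.
Proof.
move=> rel l_x lr A alg sat rho.
(* Binding [x] first provides the element of [A] needed to start [c]. *)
rewrite (eval_lift_pull _ _ rel l_x) (eval_lift_pull _ _ rel (iffLR (lr x) l_x)).
apply: eq_bind => a.
by apply: (eval_lift_sat (vs := vars l) (c := fun=> a)) => // v /mem_vars ->.
Qed.

End Terms.

Section Derivations.
Variable S : signature.

Lemma subst_comp (U V W : Type) (s : V -> term S W) (s' : U -> term S V) t :
  subst s (subst s' t) = subst (fun v => subst s (s' v)) t.
Proof.
by elim: t => [v|o a IH] //=; congr (App o); apply: functional_extensionality.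
Qed.

Lemma subst_Var (V : Type) (t : term S V) : subst Var t = t.
Proof.
by elim: t => [v|o a IH] //=; congr (App o); apply: functional_extensionality.
Qed.

Lemma rename_substE (V W : Type) (f : V -> W) (t : term S V) :
  rename f t = subst (Var \o f) t.
Proof.
by elim: t => [v|o a IH] //=; congr (App o); apply: functional_extensionality.
Qed.

Lemma occurs_subst (V W : Type) (s : V -> term S W) (t : term S V) w :
  occurs w (subst s t) <-> exists2 v, occurs v t & occurs w (s v).
Proof.
elim: t => [v|o a IH] /=; first by split=> [|[_ ->]] //; exists v.
split=> [[i /IH [v t_v s_v]]|[v [i a_v] s_v]]; first by exists v => //; exists i.
by exists i; apply/IH; exists v.
Qed.

Variables l r : term S nat.

Lemma derives_subst (V W : Type) (s : V -> term S W) (u v : term S V) :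
  derives l r u v -> derives l r (subst s u) (subst s v).
Proof.
move=> D; elim: D W s => {u v} [s0|u|u v _ IH|u v w _ IH1 _ IH2|o a b _ IH|s' u v _ IH]
  W s /=.
- by rewrite !subst_comp; apply: der_ax.
- exact: der_refl.
- exact: der_sym.
- exact: der_trans (IH1 W s) (IH2 W s).
- by apply: der_cong => i; apply: IH.
- by rewrite !subst_comp; apply: IH.
Qed.

Lemma derives_occurs (V : Type) (u v : term S V) :
  (forall n, occurs n l <-> occurs n r) ->
  derives l r u v -> forall w, occurs w u <-> occurs w v.
Proof.
move=> lr; elim=> {u v} [s|u|u v _ IH|u v w _ IH1 _ IH2|o a b _ IH|s u v _ IH] z //.
- by rewrite !occurs_subst; split=> -[n /lr n_l s_n]; exists n.
- by rewrite IH.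
- by rewrite IH1 IH2.
- by split=> -[i /IH a_i]; exists i.
- by rewrite !occurs_subst; split=> -[n /IH n_u s_n]; exists n.
Qed.

End Derivations.

Section FreshCopy.
Variable S : signature.

Lemma occ_rename_Some (t : term S nat) (v : nat) : occ (Some v) (rename Some t) = occ v t.
Proof. by elim: t => [u|o a IH] //=; apply: eq_bigr. Qed.

Lemma occ_rename_None (t : term S nat) : occ None (rename Some t) = 0.
Proof. by elim: t => [u|o a IH] //=; rewrite big1. Qed.

Lemma rename_odflt_Some (x : nat) (t : term S nat) : rename (odflt x) (rename Some t) = t.
Proof.
by elim: t => [u|o a IH] //=; congr (App o); apply: functional_extensionality.
Qed.

Lemma split_occ (x : nat) (t : term S nat) : 0 < occ x t ->
  exists s : term S (option nat),
    [/\ rename (odflt x) s = t, occ None s = 1 & occ (Some x) s = (occ x t).-1].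
Proof.
elim: t => [u|o a IH]; first by rewrite /=; case: eqP => // -> _; exists (Var None).
move=> /occursE [j /occursE a_j].
have [sj [sj_a sj_None sj_x]] := IH j a_j.
pose b i := if i == j then sj else rename Some (a i).
have b_j : b j = sj by rewrite /b eqxx.
have b_i i : i != j -> b i = rename Some (a i) by rewrite /b => /negbTE ->.
exists (App o b); split=> /=.
- congr (App o); apply: functional_extensionality => i.
  by have [->|/b_i ->] := eqVneq i j; rewrite ?b_j ?rename_odflt_Some.
- rewrite (bigD1 j) //= b_j sj_None big1 // => i /b_i ->; exact: occ_rename_None.
- rewrite (bigD1 j) //= b_j sj_x [in RHS](bigD1 j) //=.
  rewrite (eq_bigr (fun i => occ x (a i))) => [|i /b_i ->]; last exact: occ_rename_Some.
  by case: (occ x (a j)) a_j.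
Qed.

End FreshCopy.

Section TermModel.
Variables (S : signature) (l r : term S nat) (W : Type).

(* The free algebra on [W] modulo derivability from [l = r]; an element is
   the class of a term, viewed as a predicate on terms. *)
Definition Qt := {P : term S W -> Prop | exists u, P = derives l r u}.

Definition cls (u : term S W) : Qt := exist _ (derives l r u) (ex_intro _ u erefl).

Definition rep (c : Qt) : term S W :=
  proj1_sig (constructive_indefinite_description _ (proj2_sig c)).

Lemma cls_eq (u v : term S W) : cls u = cls v <-> derives l r u v.
Proof.
split=> [/(f_equal (@proj1_sig _ _)) /= ->|D]; first exact: der_refl.
have E : derives l r u = derives l r v.
  apply: functional_extensionality => w; apply: propositional_extensionality.
  by split=> D'; [apply: der_trans (der_sym D) D' | apply: der_trans D D'].
rewrite /cls; move: (ex_intro _ u _) (ex_intro _ v _); rewrite E => p1 p2.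
by rewrite (proof_irrelevance _ p1 p2).
Qed.

Lemma repK : cancel rep cls.
Proof.
case=> P ex_P; rewrite /rep /=; case: constructive_indefinite_description => u P_u.
by subst P; congr exist; apply: proof_irrelevance.
Qed.

Definition qalg : algebra S Qt := fun o f => cls (App o (rep \o f)).

Lemma eval_qalg (V : Type) (u : V -> term S W) (t : term S V) :
  eval qalg (cls \o u) t = cls (subst u t).
Proof.
elim: t => [v|o a IH] //=; apply/cls_eq; apply: der_cong => i /=.
by rewrite IH; apply/cls_eq; rewrite repK.
Qed.

Lemma qalg_sat : satisfies qalg l r.
Proof.
move=> c; have -> : c = cls \o (rep \o c).
  by apply: functional_extensionality => v /=; rewrite repK.
by rewrite !eval_qalg; apply/cls_eq; apply: der_ax.
Qed.

End TermModel.

Arguments cls {S} l r {W} u.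
Arguments qalg {S} l r W.

Lemma pair_eq_or_swap (X : Type) (y z y' z' : X) :
  (forall c, c = y \/ c = z <-> c = y' \/ c = z') ->
  (y = y' /\ z = z') \/ (y = z' /\ z = y').
Proof.
move=> yz; have [y_y'|y_z'] := iffLR (yz y) (or_introl erefl).
  have [z_y'|z_z'] := iffLR (yz z) (or_intror erefl); last by left.
  have [z'_y|z'_z] := iffRL (yz z') (or_intror erefl); by [left | right]; subst.
have [y'_y|y'_z] := iffRL (yz y') (or_introl erefl); last by right.
have [z_y'|z_z'] := iffLR (yz z) (or_intror erefl); by [left | right]; subst.
Qed.

Section PairSubstitution.
Variables (S : signature) (x : nat) (X : Type).

Definition pair_subst (y z : X) (o : option nat) : term S (nat + X) :=
  match o with
  | None => Var (inr z)
  | Some v => if v == x then Var (inr y) else Var (inl v)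
  end.

Variable s : term S (option nat).
Hypotheses (s_x : occurs (Some x) s) (s_None : occurs None s).

Lemma occurs_pair_subst (y z c : X) :
  occurs (inr c) (subst (pair_subst y z) s) <-> c = y \/ c = z.
Proof.
rewrite occurs_subst; split=> [[[v|] _ /=]|[->|->]]; last 2 first.
- by exists (Some x); rewrite //= eqxx.
- by exists None.
- by case: (v == x) => /= E; [case: E => ->; left | discriminate E].
- by move=> [->]; right.
Qed.

Lemma pair_subst_inj (l r : term S nat) (y z y' z' : X) :
  (forall v, occurs v l <-> occurs v r) ->
  ~ derives l r s (rename (swap_fresh x) s) ->
  derives l r (subst (pair_subst y z) s) (subst (pair_subst y' z') s) ->
  y = y' /\ z = z'.
Proof.
move=> lr s_nd D.
have same_vars c : c = y \/ c = z <-> c = y' \/ c = z'.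
  by rewrite -!occurs_pair_subst; exact: derives_occurs lr D _.
case: (pair_eq_or_swap same_vars) => [//|[y_z' z_y']]; subst y' z'.
have [<-|y_neq_z] := classic (y = z); first by [].
(* Sending [y] back to [x] and [z] to [x'] turns [D] into a derivation of
   the forbidden swap. *)
have [back [back_y back_z back_v]] : exists back : nat + X -> term S (option nat),
    [/\ back (inr y) = Var (Some x), back (inr z) = Var None &
        forall v, back (inl v) = Var (Some v)].
  exists (fun w => match w with
    | inl v => Var (Some v)
    | inr c => if excluded_middle_informative (c = y) then Var (Some x) else Var None
    end).
  split=> //; first by case: excluded_middle_informative.
  by case: excluded_middle_informative => // z_y; case: y_neq_z.
case: s_nd; have := derives_subst back D; rewrite !subst_comp rename_substE.
congr derives; last first.
  congr subst; apply: functional_extensionality => -[v|] /=; last exact: back_y.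
  by case: eqP => _ /=; rewrite ?back_z ?back_v.
rewrite -[RHS]subst_Var; congr subst; apply: functional_extensionality => -[v|] /=.
  by case: eqP => [->|_] /=; rewrite ?back_y ?back_v.
exact: back_z.
Qed.

End PairSubstitution.

Arguments pair_subst {S} x {X} y z o.

Section DiagonalTest.
Variables (S : signature) (l r : term S nat) (x : nat) (s : term S (option nat)).
Hypotheses (l_x : occ x l = 1) (s_r : rename (odflt x) s = r)
  (s_x : occ (Some x) s = 1) (s_None : occ None s = 1).
Variables (M : monoidal_monad) (X : Type) (q : T M X).

Local Notation Q := (Qt l r (nat + X)).

Let eval_r A (alg : algebra S A) (c : nat -> A) : eval alg c r = eval alg (c \o odflt x) s.
Proof. by rewrite -s_r eval_rename. Qed.

Let h (p : X * X) : Q := cls l r (subst (pair_subst x p.1 p.2) s).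

Let rho (v : nat) : T M Q :=
  if v == x then fmap (fun y => cls l r (Var (inr y))) q else ret (cls l r (Var (inl v))).

Lemma eval_lift_discerned_lhs :
  eval (lift_alg (qalg l r _)) rho l = fmap h (fmap (fun y => (y, y)) q).
Proof.
rewrite (eval_lift_single (c := fun v => cls l r (Var (inl v))) _ l_x); last first.
  by move=> v; rewrite /rho => /negbTE ->.
rewrite /rho eqxx -!fmap_comp; congr fmap; apply: functional_extensionality => y /=.
rewrite qalg_sat eval_r /h -eval_qalg; congr eval.
by apply: functional_extensionality => -[v|]; rewrite /upd /=; case: eqP.
Qed.

Lemma eval_lift_discerned_rhs :
  eval (lift_alg (qalg l r _)) rho r = fmap h (psi q q).
Proof.
have rho_x : rho x = fmap (fun y => cls l r (Var (inr y))) q by rewrite /rho eqxx.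
rewrite eval_r (eval_lift_pull1 _ _ s_x) /= rho_x [RHS]fmap_bindE bind_psi.
rewrite fmap_bindE bind_assoc; apply: eq_bind => y; rewrite bind_retl.
rewrite (eval_lift_single (c := upd (fun o => cls l r (pair_subst x y y o)) (Some x)
  (cls l r (Var (inr y)))) _ s_None); last first.
  move=> [v|] // _; rewrite /upd /=; case: eqP => // /eqP.
  by rewrite (inj_eq (@Some_inj _)) /rho => /negbTE ->.
rewrite /upd /= rho_x -fmap_comp fmap_bindE; apply: eq_bind => z /=; congr ret.
rewrite /h -eval_qalg; congr eval.
by apply: functional_extensionality => -[v|] //=; case: eqP => [[->]|]; rewrite ?eqxx.
Qed.

Lemma preserves_psi_diag :
  (forall v, occurs v l <-> occurs v r) ->
  ~ derives l r s (rename (swap_fresh x) s) -> preserves M l r ->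
  psi q q = fmap (fun y => (y, y)) q.
Proof.
move=> lr s_nd pres.
have occurs_s o : occ o s = 1 -> occurs o s by move=> occ1; apply/occursE; rewrite occ1.
have h_inj : injective h.
  move=> [y z] [y' z'] /cls_eq.
  by move/(pair_subst_inj (occurs_s _ s_x) (occurs_s _ s_None) lr s_nd) => /= [-> ->].
apply: (fmap_inj h_inj).
rewrite -eval_lift_discerned_lhs -eval_lift_discerned_rhs.
by symmetry; apply: pres; apply: qalg_sat.
Qed.

End DiagonalTest.

Lemma preserves_relevant (S : signature) (l r : term S nat) (x : nat)
    (s : term S (option nat)) (M : monoidal_monad) :
  occ x l = 1 -> rename (odflt x) s = r -> occ (Some x) s = 1 -> occ None s = 1 ->
  (forall v, occurs v l <-> occurs v r) ->
  ~ derives l r s (rename (swap_fresh x) s) -> preserves M l r -> relevant M.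
Proof.
move=> l_x s_r s_x s_None lr s_nd pres; apply/relevant_diagP => X q.
exact: (preserves_psi_diag l_x s_r s_x s_None q lr s_nd pres).
Qed.

Lemma preserves_sym (M : monoidal_monad) (S : signature) (l r : term S nat) :
  preserves M l r -> preserves M r l.
Proof. by move=> pres A alg sat rho; rewrite pres // => c; rewrite sat. Qed.

Lemma two_discerning_occurs (S : signature) (l r : term S nat) (x : nat) :
  two_discerning l r x -> forall v, occurs v l <-> occurs v r.
Proof.
case=> l_x r_x same _ v; rewrite !occursE.
by have [->|/eqP /same [->]] := eqVneq v x; rewrite ?l_x ?r_x.
Qed.

Lemma relevant_iff_preserves (S : signature) (l r : term S nat) (x : nat)
    (M : monoidal_monad) :
  two_discerning l r x -> relevant M <-> preserves M l r.
Proof.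
move=> disc; have lr := two_discerning_occurs disc.
case: disc => l_x r_x _ s_nd.
have r_x_pos : 0 < occ x r by rewrite r_x.
have [s [s_r s_None s_x]] := split_occ r_x_pos.
rewrite r_x in s_x.
have l_x_occurs : occurs x l by apply/occursE; rewrite l_x.
split=> [rel|]; first exact: relevant_preserves rel l_x_occurs lr.
exact: preserves_relevant l_x s_r s_x s_None lr (s_nd s s_r s_None).
Qed.

Theorem theorem5 (S : signature) (t1 t2 : term S nat) (x : nat)
  (Hdisc : two_discerning t1 t2 x \/ two_discerning t2 t1 x)
  (M : monoidal_monad) :
  relevant M <-> preserves M t1 t2.
Proof.
case: Hdisc => /(relevant_iff_preserves M) ->; first by [].
by split; apply: preserves_sym.
Qed.
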